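(* Let $\pi$ be an irreducible permutation on $\mathcal{A}$ and let $v_1',v_2',v_3',v_4'\in\mathbb{Z}^{\mathcal{A}}$ satisfy $$\big(|\langle v_i',v_j'\rangle|\big)_{i,j=1}^4=\begin{pmatrix}0&0&0&1\\0&0&1&1\\0&1&0&1\\1&1&1&0\end{pmatrix}.$$ Then $T_{v_1'+v_2'}^2,\ T_{v_1'-v_2'}^2,\ T_{v_1'+v_3'}^2,\ T_{v_1'-v_3'}^2\in G_{\{v_1',v_2',v_3',v_4'\}}$.
   Context: $\mathcal{A}$ is a finite alphabet, $\pi=(\pi_{\mathrm t},\pi_{\mathrm b})$ a pair of bijections $\mathcal{A}\to\{1,\dots,|\mathcal{A}|\}$. $(\Omega_\pi)_{\alpha\beta}=+1$ if $\pi_{\mathrm t}(\alpha)<\pi_{\mathrm t}(\beta)$ and $\pi_{\mathrm b}(\alpha)>\pi_{\mathrm b}(\beta)$, $-1$ if $\pi_{\mathrm t}(\alpha)>\pi_{\mathrm t}(\beta)$ and $\pi_{\mathrm b}(\alpha)<\pi_{\mathrm b}(\beta)$, $0$ otherwise; $\langle u,v\rangle=u\Omega_\pi v^{\intercal}$ on $\mathbb{Z}^{\mathcal{A}}$ (identified with $H_1(M_\pi\setminus\Sigma_\pi;\mathbb{Z})$). For $v\in\mathbb{Z}^{\mathcal{A}}$ the symplectic transvection is $T_v(u)=u+\langle v,u\rangle v$. For a set $V\subseteq\mathbb{Z}^{\mathcal{A}}$, $G_V$ is the group generated by $\{T_v\}_{v\in V}$. *)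

From HB Require Import structures.
From mathcomp Require Import all_boot all_order all_algebra.
Set Implicit Arguments. Unset Strict Implicit. Unset Printing Implicit Defensive.
Import Order.TTheory GRing.Theory Num.Theory.
Local Open Scope ring_scope.

(* A permutation pi = (pi_t, pi_b) on the finite alphabet A: a pair of
   bijections A -> {0,...,|A|-1} (positions shifted by one w.r.t. the paper). *)
Definition is_perm_pair (A : finType) (pt pb : A -> 'I_#|A|) : Prop :=
  bijective pt /\ bijective pb.

Definition irreducible_perm (A : finType) (pt pb : A -> 'I_#|A|) : Prop :=
  forall k : nat, (0 < k)%N -> (k < #|A|)%N ->
    [set a | (pt a < k)%N] != [set a | (pb a < k)%N].

Definition Omega (A : finType) (pt pb : A -> 'I_#|A|) (a b : A) : int :=
  if ((pt a < pt b)%N && (pb b < pb a)%N) then 1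
  else if ((pt b < pt a)%N && (pb a < pb b)%N) then -1
  else 0.

Notation vec A := {ffun A -> int}.

Definition omega_form (A : finType) (pt pb : A -> 'I_#|A|) (u v : vec A) : int :=
  \sum_(a : A) \sum_(b : A) u a * Omega pt pb a b * v b.

Definition transv (A : finType) (pt pb : A -> 'I_#|A|) (v : vec A) (u : vec A)
  : vec A := [ffun a => u a + omega_form pt pb v u * v a].

Definition transv_inv (A : finType) (pt pb : A -> 'I_#|A|) (v : vec A) (u : vec A)
  : vec A := [ffun a => u a - omega_form pt pb v u * v a].

Inductive gen_word (A : finType) (pt pb : A -> 'I_#|A|) (V : vec A -> Prop)
  : (vec A -> vec A) -> Prop :=
| gw_id : gen_word pt pb V id
| gw_T : forall f v, V v -> gen_word pt pb V f ->
    gen_word pt pb V (transv pt pb v \o f)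
| gw_Tinv : forall f v, V v -> gen_word pt pb V f ->
    gen_word pt pb V (transv_inv pt pb v \o f).

Definition in_G (A : finType) (pt pb : A -> 'I_#|A|) (V : vec A -> Prop)
  (g : vec A -> vec A) : Prop :=
  exists f, gen_word pt pb V f /\ f =1 g.

Definition abs_table : seq (seq int) :=
  [:: [:: 0; 0; 0; 1];
      [:: 0; 0; 1; 1];
      [:: 0; 1; 0; 1];
      [:: 1; 1; 1; 0]].

(* Only the antisymmetry of <.,.> is used, not the hypotheses on pi.  If
   <a,b> = 0 and <a,c>, <b,c> are units, the homological chain relation
   (T_a T_c T_b)^4 = T_d^2 with d = a - <a,c><b,c> b holds; it is a direct
   computation in the coordinates of a vector along a, b and c.  Applied to
   (v1', v2', v4') it yields the square of T_(v1' + v2') or of T_(v1' - v2').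
   Conjugating T_(v4') by T_(v3')^(+-2) gives a transvection of the group along
   a vector c with <v1',c> = <v1',v4'> and <v2',c> = -<v2',v4'>, and the chain
   relation for (v1', v2', c) yields the other square.  The same argument with
   v2' and v3' exchanged gives the remaining two. *)
From HB Require Import structures.
From mathcomp Require Import all_boot all_order all_algebra.
From mathcomp Require Import ring.
Import Order.TTheory GRing.Theory Num.Theory.
Local Open Scope ring_scope.

Lemma normr_eq1 {R : realDomainType} {x : R} : `|x| = 1 -> x = 1 \/ x = -1.
Proof.
by move/eqP; rewrite -{1}normr1 eqr_norm2 => /orP[] /eqP; [left | right].
Qed.

Lemma normr_eq1_eq_or_opp {R : realDomainType} {x y : R} :
  `|x| = 1 -> `|y| = 1 -> x = y \/ x = - y.
Proof.
move=> x1 y1; have : `|x| == `|y| by rewrite x1 y1.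
by rewrite eqr_norm2 => /orP[] /eqP; [left | right].
Qed.

Definition shift {A : finType} (u : vec A) (k : int) (w : vec A) : vec A :=
  [ffun i => u i + k * w i].

Lemma shift1 {A : finType} (u w : vec A) : shift u 1 w = u + w.
Proof. by apply/ffunP => i; rewrite !ffunE mul1r. Qed.

Lemma shiftN1 {A : finType} (u w : vec A) : shift u (-1) w = u - w.
Proof. by apply/ffunP => i; rewrite !ffunE mulN1r. Qed.

Section SymplecticForm.
Context {A : finType} {pt pb : A -> 'I_#|A|}.
Local Notation om := (omega_form pt pb).
Local Notation T := (transv pt pb).
Local Notation Tinv := (transv_inv pt pb).

Lemma Omega_antisym a b : Omega pt pb a b = - Omega pt pb b a.
Proof.
rewrite /Omega.
by case: (ltngtP (pt a) (pt b)) => ?; case: (ltngtP (pb a) (pb b)) => ?.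
Qed.

Lemma omega_form_antisym u v : om u v = - om v u.
Proof.
rewrite /omega_form exchange_big -sumrN; apply: eq_bigr => a _.
rewrite -sumrN; apply: eq_bigr => b _.
by rewrite Omega_antisym; ring.
Qed.

Lemma omega_form_alt u : om u u = 0.
Proof.
have : om u u *+ 2 == 0 by rewrite mulr2n {1}omega_form_antisym addNr.
by rewrite mulrn_eq0 => /eqP.
Qed.

Lemma omega_form_shiftr v u k w : om v (shift u k w) = om v u + k * om v w.
Proof.
rewrite /omega_form mulr_sumr -big_split; apply: eq_bigr => a _.
rewrite mulr_sumr -big_split; apply: eq_bigr => b _.
by rewrite ffunE /=; ring.
Qed.

Lemma omega_form_shiftl v u k w : om (shift u k w) v = om u v + k * om w v.
Proof.
by rewrite omega_form_antisym omega_form_shiftr !(omega_form_antisym v); ring.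
Qed.

Lemma transvE v u : T v u = shift u (om v u) v.
Proof. by []. Qed.

Lemma transv_invE v u : Tinv v u = shift u (- om v u) v.
Proof. by apply/ffunP => i; rewrite !ffunE mulNr. Qed.

Lemma transv_conj w v u : T w (T v (Tinv w u)) = T (T w v) u.
Proof.
rewrite transv_invE !transvE !(omega_form_shiftr, omega_form_shiftl).
rewrite omega_form_alt (omega_form_antisym v w).
by apply/ffunP => i; rewrite !ffunE; ring.
Qed.

Lemma transv_inv_conj w v u : Tinv w (T v (T w u)) = T (Tinv w v) u.
Proof.
rewrite !transv_invE !transvE !(omega_form_shiftr, omega_form_shiftl).
rewrite omega_form_alt (omega_form_antisym v w).
by apply/ffunP => i; rewrite !ffunE; ring.
Qed.

Lemma omega_form_transv_transv x e c :
  om x (T e (T e c)) = om x c + 2 * (om e c * om x e).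
Proof. by rewrite !transvE !omega_form_shiftr omega_form_alt; ring. Qed.

Lemma omega_form_transv_inv_transv_inv x e c :
  om x (Tinv e (Tinv e c)) = om x c - 2 * (om e c * om x e).
Proof. by rewrite !transv_invE !omega_form_shiftr omega_form_alt; ring. Qed.

Section Chain.
Context {a b c : vec A}.
Hypothesis ab0 : om a b = 0.

Let coord u x y z := shift (shift (shift u x a) y b) z c.

Let coord0 u : coord u 0 0 0 = u.
Proof. by apply/ffunP => i; rewrite !ffunE; ring. Qed.

Let transv_a_coord u x y z :
  T a (coord u x y z) = coord u (x + (om a u + z * om a c)) y z.
Proof.
rewrite transvE !omega_form_shiftr omega_form_alt ab0.
by apply/ffunP => i; rewrite !ffunE; ring.
Qed.

Let transv_b_coord u x y z :
  T b (coord u x y z) = coord u x (y + (om b u + z * om b c)) z.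
Proof.
rewrite transvE !omega_form_shiftr omega_form_alt (omega_form_antisym b a) ab0.
by apply/ffunP => i; rewrite !ffunE; ring.
Qed.

Let transv_c_coord u x y z :
  T c (coord u x y z) = coord u x y (z + (om c u - x * om a c - y * om b c)).
Proof.
rewrite transvE !omega_form_shiftr omega_form_alt.
rewrite (omega_form_antisym c a) (omega_form_antisym c b).
by apply/ffunP => i; rewrite !ffunE; ring.
Qed.

Let transv_ab_coord s u x y z :
  let k := om a u + z * om a c + s * (om b u + z * om b c) in
  T (shift a s b) (coord u x y z) = coord u (x + k) (y + s * k) z.
Proof.
rewrite /= transvE omega_form_shiftl !omega_form_shiftr !omega_form_alt ab0.
rewrite (omega_form_antisym b a) ab0.
by apply/ffunP => i; rewrite !ffunE; ring.
Qed.

Lemma transv_chain :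
  `|om a c| = 1 -> `|om b c| = 1 ->
  let W := T a \o T c \o T b in
  let d := shift a (- (om a c * om b c)) b in
  W \o W \o W \o W =1 T d \o T d.
Proof.
move=> /normr_eq1 ac1 /normr_eq1 bc1 W d u.
rewrite -(coord0 u) /W /d /=.
do 4! rewrite transv_b_coord transv_c_coord transv_a_coord.
rewrite !transv_ab_coord.
by case: ac1 => ->; case: bc1 => ->; congr coord; ring.
Qed.

End Chain.

Section GeneratedGroup.
Context {V : vec A -> Prop}.
Local Notation G := (in_G pt pb V).

Lemma eq_in_G f g : f =1 g -> G f -> G g.
Proof. by move=> fg [h [wh eh]]; exists h; split => // x; rewrite eh fg. Qed.

Lemma gen_word_comp f g :
  gen_word pt pb V f -> gen_word pt pb V g -> gen_word pt pb V (f \o g).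
Proof.
elim=> [|f' v Vv _ IH|f' v Vv _ IH] wg //.
- exact: gw_T Vv (IH wg).
- exact: gw_Tinv Vv (IH wg).
Qed.

Lemma in_G_comp f g : G f -> G g -> G (f \o g).
Proof.
case=> f' [wf ef] [g' [wg eg]]; exists (f' \o g'); split.
  exact: gen_word_comp.
by move=> x /=; rewrite eg ef.
Qed.

Lemma in_G_transv v : V v -> G (T v).
Proof.
by move=> Vv; exists (T v \o id); split; first exact: gw_T (gw_id _ _ _).
Qed.

Lemma in_G_transv_inv v : V v -> G (Tinv v).
Proof.
by move=> Vv; exists (Tinv v \o id); split; first exact: gw_Tinv (gw_id _ _ _).
Qed.

Lemma in_G_transv_conj w v : V w -> G (T v) -> G (T (T w v)).
Proof.
move=> Vw Gv; apply: (@eq_in_G (T w \o T v \o Tinv w)).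
  by move=> u /=; rewrite transv_conj.
apply: in_G_comp; last exact: in_G_transv_inv.
by apply: in_G_comp => //; apply: in_G_transv.
Qed.

Lemma in_G_transv_inv_conj w v : V w -> G (T v) -> G (T (Tinv w v)).
Proof.
move=> Vw Gv; apply: (@eq_in_G (Tinv w \o T v \o T w)).
  by move=> u /=; rewrite transv_inv_conj.
apply: in_G_comp; last exact: in_G_transv.
by apply: in_G_comp => //; apply: in_G_transv_inv.
Qed.

Lemma in_G_transv_chain [a b c] :
  G (T a) -> G (T b) -> G (T c) ->
  om a b = 0 -> `|om a c| = 1 -> `|om b c| = 1 ->
  let d := shift a (- (om a c * om b c)) b in G (T d \o T d).
Proof.
move=> Ga Gb Gc ab0 ac1 bc1 d.
have GW : G (T a \o T c \o T b) by apply: in_G_comp => //; apply: in_G_comp.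
apply: eq_in_G (transv_chain ab0 ac1 bc1) _.
by apply: in_G_comp => //; apply: in_G_comp => //; apply: in_G_comp.
Qed.

Lemma in_G_transv_flip [a b c e] :
  V e -> G (T c) -> om a e = 0 ->
  `|om b c| = 1 -> `|om b e| = 1 -> `|om e c| = 1 ->
  exists c', [/\ G (T c'), om a c' = om a c & om b c' = - om b c].
Proof.
move=> Ve Gc ae0 bc1 be1 ec1.
have eps1 : `|om e c * om b e| = 1 by rewrite normrM ec1 be1 mulr1.
case: (normr_eq1_eq_or_opp eps1 bc1) => eps.
- exists (Tinv e (Tinv e c)); split.
  + by do 2! apply: in_G_transv_inv_conj => //.
  + by rewrite omega_form_transv_inv_transv_inv ae0; ring.
  + by rewrite omega_form_transv_inv_transv_inv eps; ring.
- exists (T e (T e c)); split.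
  + by do 2! apply: in_G_transv_conj => //.
  + by rewrite omega_form_transv_transv ae0; ring.
  + by rewrite omega_form_transv_transv eps; ring.
Qed.

Lemma in_G_transv_sq_add_sub [a b c e] :
  G (T a) -> G (T b) -> G (T c) -> V e ->
  om a b = 0 -> om a e = 0 ->
  `|om a c| = 1 -> `|om b c| = 1 -> `|om b e| = 1 -> `|om e c| = 1 ->
  G (T (a + b) \o T (a + b)) /\ G (T (a - b) \o T (a - b)).
Proof.
move=> Ga Gb Gc Ve ab0 ae0 ac1 bc1 be1 ec1.
have [c' [Gc' ac' bc']] := in_G_transv_flip Ve Gc ae0 bc1 be1 ec1.
have ac'1 : `|om a c'| = 1 by rewrite ac'.
have bc'1 : `|om b c'| = 1 by rewrite bc' normrN.
have /= Gd := in_G_transv_chain Ga Gb Gc ab0 ac1 bc1.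
have /= Gd' := in_G_transv_chain Ga Gb Gc' ab0 ac'1 bc'1.
rewrite ac' bc' mulrN opprK in Gd'.
have s1 : `|om a c * om b c| = 1 by rewrite normrM ac1 bc1 mulr1.
have [sP|sN] := normr_eq1 s1.
- by rewrite sP shiftN1 in Gd; rewrite sP shift1 in Gd'.
- by rewrite sN opprK shift1 in Gd; rewrite sN shiftN1 in Gd'.
Qed.

End GeneratedGroup.

End SymplecticForm.

Theorem corollary2p10 (A : finType) (pt pb : A -> 'I_#|A|)
  (v1 v2 v3 v4 : {ffun A -> int}) :
  is_perm_pair pt pb ->
  irreducible_perm pt pb ->
  (forall i j : 'I_4,
     `|omega_form pt pb (nth 0 [:: v1; v2; v3; v4] i)
                        (nth 0 [:: v1; v2; v3; v4] j)|
     = nth 0 (nth [::] abs_table i) j) ->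
  let V := fun w => w = v1 \/ w = v2 \/ w = v3 \/ w = v4 in
  in_G pt pb V (transv pt pb (v1 + v2) \o transv pt pb (v1 + v2)) /\
  in_G pt pb V (transv pt pb (v1 - v2) \o transv pt pb (v1 - v2)) /\
  in_G pt pb V (transv pt pb (v1 + v3) \o transv pt pb (v1 + v3)) /\
  in_G pt pb V (transv pt pb (v1 - v3) \o transv pt pb (v1 - v3)).
Proof.
move=> _ _ table V.
have om_ij i j (hi : (i < 4)%N) (hj : (j < 4)%N) :=
  table (Ordinal hi) (Ordinal hj).
have /normr0_eq0 v12 := om_ij 0%N 1%N isT isT.
have /normr0_eq0 v13 := om_ij 0%N 2%N isT isT.
have V2 : V v2 by right; left.
have V3 : V v3 by do 2! right; left.
have G1 : in_G pt pb V (transv pt pb v1) by apply: in_G_transv; left.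
have G2 : in_G pt pb V (transv pt pb v2) by apply: in_G_transv.
have G3 : in_G pt pb V (transv pt pb v3) by apply: in_G_transv.
have G4 : in_G pt pb V (transv pt pb v4) by apply: in_G_transv; do 3! right.
have [add12 sub12] := in_G_transv_sq_add_sub G1 G2 G4 V3 v12 v13
  (om_ij 0%N 3%N isT isT) (om_ij 1%N 3%N isT isT)
  (om_ij 1%N 2%N isT isT) (om_ij 2%N 3%N isT isT).
have [add13 sub13] := in_G_transv_sq_add_sub G1 G3 G4 V2 v13 v12
  (om_ij 0%N 3%N isT isT) (om_ij 2%N 3%N isT isT)
  (om_ij 2%N 1%N isT isT) (om_ij 1%N 3%N isT isT).
by do !split.
Qed.
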